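(* Let $F$ be a signature on a finite set $V$ that is non-degenerate, but such that every pinning $F_p$ with $\mathrm{dom}(p)\ne\emptyset$ is degenerate. Then either $|V|=2$, or $\mathrm{supp}(F)=\{x,\overline x\}$ for some configuration $x$.
   Context: A signature on $V$ is a function $F:\{0,1\}^V\to\mathbb{R}_{\ge0}$; $\mathrm{supp}(F)=\{x:F(x)\ne0\}$. $F$ is degenerate if it is a product $F(x)=\prod_{v\in V}U_v(x_v)$ of functions of single variables (equivalently, up to renaming, a tensor product of signatures of arity at most one). A partial configuration $p$ is an element of $\{0,1\}^{\mathrm{dom}(p)}$, $\mathrm{dom}(p)\subseteq V$; the pinning $F_p$ on $V\setminus\mathrm{dom}(p)$ is $F_p(x)=F(x,p)$. $\overline x_i=1-x_i$. *)

From HB Require Import structures.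
From mathcomp Require Import all_boot all_order all_algebra.
Set Implicit Arguments. Unset Strict Implicit. Unset Printing Implicit Defensive.
Import Order.TTheory GRing.Theory Num.Theory.
Local Open Scope ring_scope.

(* A configuration on V is a 0/1 assignment; a signature is F : config V -> R. *)
Definition config (V : finType) := {ffun V -> bool}.

Definition cconf (V : finType) (x : config V) : config V := [ffun v => ~~ x v].

Definition supp (V : finType) (R : numDomainType) (F : config V -> R) : {set config V} :=
  [set x | F x != 0].

(* A signature G whose variables are the elements of A (a function of the full
   configuration that only depends on the coordinates in A) is degenerate if it
   is a product of unary functions of the variables in A (up to a constant
   factor, i.e. an arity-0 signature; this only matters when A is empty). *)
Definition degenerate_on (V : finType) (R : numDomainType) (A : {set V})
    (G : config V -> R) : Prop :=
  exists (c : R) (U : V -> bool -> R),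
    forall x : config V, G x = c * \prod_(v in A) U v (x v).

Definition degenerate (V : finType) (R : numDomainType) (F : config V -> R) : Prop :=
  degenerate_on [set: V] F.

(* pinning by the partial configuration p with domain D: the coordinates in D
   are fixed to p, the remaining coordinates (in ~: D) are free. *)
Definition pin (V : finType) (R : numDomainType) (D : {set V}) (p : V -> bool)
    (F : config V -> R) : config V -> R :=
  fun x => F [ffun v => if v \in D then p v else x v].

From HB Require Import structures.
From mathcomp Require Import all_boot all_order all_algebra.
From mathcomp Require Import ring.
Set Implicit Arguments. Unset Strict Implicit. Unset Printing Implicit Defensive.
Import Order.TTheory GRing.Theory Num.Theory.
Local Open Scope ring_scope.

(* Fix a variable v and split F into its two slices
   G_b(x) = F(x with x_v := b), b in {0,1}; each slice is a pinning of F, so it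
   is a product of unary functions of the variables other than v.  Pinning a
   second variable w <> v makes F itself degenerate on the remaining variables,
   and a product function is invariant under swapping coordinates between two
   arguments; this yields the exchange rule
       G_0(y) G_1(y') = G_0(y') G_1(y)   whenever y_w = y'_w for some w <> v.
   If some slice vanishes identically, or if the two slices are proportional,
   F is degenerate.  When |V| >= 3 and some configuration z lies in the support
   of both slices, the exchange rule with a third variable forces the factors
   of G_0 and G_1 to be proportional coordinate by coordinate, hence G_1 is a
   multiple of G_0.  Otherwise the supports are disjoint, and the exchange rule
   says that any y in supp G_0 and y' in supp G_1 disagree at every w <> v;
   hence supp F consists of exactly two complementary configurations. *)

(* x with the coordinate v overwritten by b; this is the configuration a
   pinning of the single variable v evaluates F at. *)
Definition setv (V : finType) (v : V) (b : bool) (x : config V) : config V :=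
  [ffun t => if t \in [set v] then b else x t].

Lemma setv_at (V : finType) (v : V) b x : setv v b x v = b.
Proof. by rewrite ffunE set11. Qed.

Lemma setv_ne (V : finType) (v w : V) b x : w != v -> setv v b x w = x w.
Proof. by move=> wv; rewrite ffunE in_set1 (negbTE wv). Qed.

Lemma setv_id (V : finType) (v : V) (x : config V) : setv v (x v) x = x.
Proof. by apply/ffunP => t; rewrite ffunE in_set1; case: eqP => [->|]. Qed.

Lemma degenerate_no_variables (R : numDomainType) (V : finType)
    (F : config V -> R) : (V -> False) -> degenerate F.
Proof.
move=> V0; exists (F [ffun _ => false]), (fun _ _ => 1) => x.
rewrite big1 // mulr1; congr F; apply/ffunP => t; by case: (V0 t).
Qed.

Lemma degenerate_exchange (R : numDomainType) (V : finType) (A : {set V})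
    (G : config V -> R) (x y x' y' : config V) :
  degenerate_on A G ->
  (forall u, (x' u, y' u) = (x u, y u) \/ (x' u, y' u) = (y u, x u)) ->
  G x * G y = G x' * G y'.
Proof.
case=> c [U HG] swap; rewrite !HG mulrACA [RHS]mulrACA -!big_split /=.
congr (_ * _); apply: eq_bigr => u _.
by case: (swap u) => -[-> ->] //; rewrite mulrC.
Qed.

Lemma prod_setv (R : numDomainType) (V : finType) (T : {set V})
    (U : V -> bool -> R) (u : V) (a : bool) (z : config V) :
  u \in T ->
  \prod_(t in T) U t (setv u a z t) = U u a * \prod_(t in T | t != u) U t (z t).
Proof.
move=> uT; rewrite (bigD1 u uT) /= setv_at; congr (_ * _).
by apply: eq_bigr => t /andP[_ tu]; rewrite setv_ne.
Qed.

(* Two product functions that are nonzero at z and satisfy the exchange rule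
   between z and each of its one-coordinate modifications are proportional:
   cancelling the common factors shows that their unary factors are
   proportional coordinate by coordinate. *)
Lemma proportional_products (R : numDomainType) (V : finType) (T : {set V})
    (G0 G1 : config V -> R) (z : config V) :
  degenerate_on T G0 -> degenerate_on T G1 -> G0 z != 0 -> G1 z != 0 ->
  (forall u a, u \in T -> G0 (setv u a z) * G1 z = G0 z * G1 (setv u a z)) ->
  forall x, G0 x * G1 z = G0 z * G1 x.
Proof.
move=> [c0 [A HA]] [c1 [B HB]] G0z G1z exch x.
have factor_ratio u : u \in T -> A u (x u) * B u (z u) = A u (z u) * B u (x u).
  move=> uT; have := exch u (x u) uT.
  move: G0z G1z; rewrite !HA !HB !(prod_setv _ _ _ uT) !(bigD1 u uT) /=.
  set PA := \prod_(t in T | t != u) A t (z t).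
  set PB := \prod_(t in T | t != u) B t (z t).
  rewrite !mulf_eq0 !negb_or => /and3P[c0n _ PAn] /and3P[c1n _ PBn] E.
  have nz : c0 * PA * (c1 * PB) != 0 by rewrite !mulf_neq0.
  apply: (mulfI nz); transitivity (c0 * (A u (x u) * PA) * (c1 * (B u (z u) * PB))).
    by ring.
  by rewrite E; ring.
rewrite !HA !HB mulrACA [RHS]mulrACA -!big_split /=.
by congr (_ * _); apply: eq_bigr => t tT; rewrite factor_ratio.
Qed.

Lemma degenerate_split (R : numDomainType) (V : finType) (F G : config V -> R)
    (v : V) (a : bool -> R) :
  degenerate_on (~: [set v]) G -> (forall x, F x = a (x v) * G x) ->
  degenerate F.
Proof.
move=> [c [U HG]] HF; exists c, (fun u b => if u == v then a b else U u b) => x.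
rewrite HF HG [in RHS](bigD1 v) ?inE //= eqxx mulrCA; congr (_ * (_ * _)).
apply: eq_big => [u|u]; first by rewrite !inE.
by rewrite !inE => /negbTE ->.
Qed.

Lemma third_variable (V : finType) (u v : V) :
  #|V| != 2%N -> u != v -> exists2 w, w != v & w != u.
Proof.
move=> V2 uv; case: (pickP (fun w => (w != v) && (w != u))) => [w /andP[] | none].
  by exists w.
have VE : [set: V] = [set v; u].
  by apply/setP => w; rewrite !inE; have := none w; case: (w == v); case: (w == u).
by move: V2; rewrite -cardsT VE cards2 (eq_sym v) uv.
Qed.

Definition slice (R : numDomainType) (V : finType) (F : config V -> R)
    (v : V) (b : bool) : config V -> R :=
  pin [set v] (fun _ => b) F.

Lemma sliceE (R : numDomainType) (V : finType) (F : config V -> R) v b x :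
  slice F v b x = F (setv v b x).
Proof. by []. Qed.

Lemma slice_self (R : numDomainType) (V : finType) (F : config V -> R) v x :
  F x = slice F v (x v) x.
Proof. by rewrite sliceE setv_id. Qed.

Section Slices.

Variables (R : numFieldType) (V : finType) (F : config V -> R).

Hypothesis Fpin : forall (D : {set V}) (p : V -> bool),
  D != set0 -> degenerate_on (~: D) (pin D p F).

Lemma pin1_degenerate (w : V) (p : V -> bool) :
  degenerate_on (~: [set w]) (pin [set w] p F).
Proof. by apply: Fpin; apply/set0Pn; exists w; rewrite set11. Qed.

Variable v : V.

Notation G b := (slice F v b).

(* The exchange rule between the two slices, obtained by pinning a second
   variable w at the common value of y and y'. *)
Lemma slice_exchange (w : V) (y y' : config V) :
  w != v -> y w = y' w -> G false y * G true y' = G false y' * G true y.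
Proof.
move=> wv yw.
have swap u : (setv v false y' u, setv v true y u) =
                (setv v false y u, setv v true y' u) \/
              (setv v false y' u, setv v true y u) =
                (setv v true y' u, setv v false y u).
  by rewrite !ffunE in_set1; case: (u == v); [left | right].
pose H := pin [set w] (fun _ => y w) F.
have HE b (y0 : config V) : y0 w = y w -> H (setv v b y0) = G b y0.
  move=> y0w; rewrite sliceE -[in RHS](setv_id w (setv v b y0)).
  by rewrite setv_ne // y0w.
have := degenerate_exchange (pin1_degenerate w (fun _ => y w)) swap.
by rewrite -/H !HE // => ->; rewrite mulrC.
Qed.

Lemma degenerate_proportional_slices (b : bool) (k : R) :
  (forall x, G (~~ b) x = k * G b x) -> degenerate F.
Proof.
move=> Gk; apply: (degenerate_split (pin1_degenerate v (fun _ => b))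
  (a := fun c => if c == b then 1 else k)) => x.
rewrite (slice_self F v x).
by case: b Gk => /= Gk; case: (x v); rewrite /= ?mul1r ?Gk.
Qed.

Lemma degenerate_vanishing_slice (b : bool) :
  (forall x, G (~~ b) x = 0) -> degenerate F.
Proof.
move=> Gb0; apply: (degenerate_proportional_slices (b := b) (k := 0)) => x.
by rewrite Gb0 mul0r.
Qed.

Lemma degenerate_common_point (z : config V) :
  #|V| != 2%N -> G false z != 0 -> G true z != 0 -> degenerate F.
Proof.
move=> V2 G0z G1z.
have exch u a : u \in ~: [set v] ->
    G false (setv u a z) * G true z = G false z * G true (setv u a z).
  rewrite in_setC1 => uv; have [w wv wu] := third_variable V2 uv.
  by apply: slice_exchange wv _; rewrite setv_ne.
have prop : forall x, G false x * G true z = G false z * G true x :=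
  proportional_products (pin1_degenerate v (fun _ => false))
  (pin1_degenerate v (fun _ => true)) G0z G1z exch.
apply: (degenerate_proportional_slices (b := false)
  (k := G true z / G false z)) => x.
by apply: (mulfI G0z); rewrite -prop; field.
Qed.

Lemma disjoint_slices_opposite (y y' : config V) :
  (forall z, G false z != 0 -> G true z = 0) ->
  G false y != 0 -> G true y' != 0 -> forall w, w != v -> y' w = ~~ y w.
Proof.
move=> disj Gy Gy' w wv.
have differ : y w != y' w.
  apply/eqP => yw; have := slice_exchange wv yw.
  have [G0y' | /disj G1y'] := eqVneq (G false y') 0; last first.
    by rewrite G1y' eqxx in Gy'.
  by rewrite G0y' mul0r => /eqP; rewrite mulf_eq0 (negbTE Gy) (negbTE Gy').
by move: differ; case: (y w); case: (y' w).
Qed.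

Lemma support_disjoint_slices (z0 z1 : config V) :
  (forall z, G false z != 0 -> G true z = 0) ->
  G false z0 != 0 -> G true z1 != 0 ->
  supp F = [set setv v false z0; cconf (setv v false z0)].
Proof.
move=> disj G0z0 G1z1; have opp := disjoint_slices_opposite disj.
have -> : cconf (setv v false z0) = setv v true z1.
  apply/ffunP => t; rewrite !ffunE in_set1.
  by case: eqVneq => [// | tv]; rewrite (opp _ _ G0z0 G1z1 t tv).
apply/setP => y; rewrite /supp !inE; apply/idP/idP; last first.
  by case/orP => /eqP ->; rewrite -sliceE.
rewrite (slice_self F v y); case yv: (y v) => Gy; apply/orP; [right | left];
  apply/eqP/ffunP => t; rewrite ffunE in_set1;
  (case: eqVneq => [-> // | tv]).
- by rewrite (opp _ _ G0z0 Gy t tv) (opp _ _ G0z0 G1z1 t tv).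
- by apply: negb_inj; rewrite -(opp _ _ Gy G1z1 t tv) (opp _ _ G0z0 G1z1 t tv).
Qed.

End Slices.

Theorem mainTheorem10 (R : rcfType) (V : finType) (F : config V -> R)
    (Fnn : forall x, 0 <= F x)
    (Fnd : ~ degenerate F)
    (Fpin : forall (D : {set V}) (p : V -> bool),
              D != set0 -> degenerate_on (~: D) (pin D p F)) :
  #|V| = 2%N \/ exists x : config V, supp F = [set x; cconf x].
Proof.
have [-> | V2] := eqVneq #|V| 2%N; [by left | right].
have [v _ | V0] := pickP (fun _ : V => true); last first.
  by case: Fnd; apply: degenerate_no_variables => t; have := V0 t.
pose G b := slice F v b.
have [z /andP[G0z G1z] | nocommon] :=
  pickP (fun z => (G false z != 0) && (G true z != 0)).
  by case: Fnd; apply: (degenerate_common_point Fpin V2 G0z G1z).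
have disj z : G false z != 0 -> G true z = 0.
  by move=> G0z; apply/eqP; have := nocommon z; rewrite G0z /= => /negbFE.
have [z0 G0z0 | G0zero] := pickP (fun z => G false z != 0); last first.
  case: Fnd; apply: (degenerate_vanishing_slice Fpin (b := true)) => x.
  exact/eqP/negbFE/G0zero.
have [z1 G1z1 | G1zero] := pickP (fun z => G true z != 0); last first.
  case: Fnd; apply: (degenerate_vanishing_slice Fpin (b := false)) => x.
  exact/eqP/negbFE/G1zero.
by exists (setv v false z0); apply: support_disjoint_slices disj G0z0 G1z1.
Qed.
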